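(* Let $C$ be a copula on $[0,1]^d$ such that $C(\mathbf{u})=1-\|\mathbf{1}-\mathbf{u}\|_D+o(\|\mathbf{1}-\mathbf{u}\|_D)$ as $\mathbf{u}\uparrow\mathbf{1}$, where $\|\cdot\|_D$ is a $D$-norm on $\mathbb{R}^d$. Let $\|\cdot\|_C$ be the $F$-norm on $\mathbb{R}^{d+1}$ corresponding to $C$. Then $$1-\|(x,1,\dots,1)\|_C=(1-x)-\frac{(1-x)^2}{2}\|\mathbf{1}\|_D+o((1-x)^2)\quad\text{as }x\uparrow1.$$
   Context: A copula on $[0,1]^d$ is a distribution function on $\mathbb{R}^d$ with standard uniform margins. If $\mathbf{U}=(U_1,\dots,U_d)$ has distribution function $C$, its $F$-norm is $\|\mathbf{x}\|_C=E(\max(|x_0|,|x_1|U_1,\dots,|x_d|U_d))$, $\mathbf{x}\in\mathbb{R}^{d+1}$. A $D$-norm on $\mathbb{R}^d$ is a norm $\|\mathbf{x}\|_D=E(\max(|x_1|Z_1,\dots,|x_d|Z_d))$ with $\mathbf{Z}$ componentwise nonnegative and $E(Z_i)=1$. $\mathbf{1}=(1,\dots,1)\in\mathbb{R}^d$; $\mathbf{u}\uparrow\mathbf{1}$ is componentwise. *)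

From HB Require Import structures.
From mathcomp Require Import all_boot all_order all_algebra.
From mathcomp Require Import all_classical all_reals all_analysis.
Set Implicit Arguments. Unset Strict Implicit. Unset Printing Implicit Defensive.
Import Order.TTheory GRing.Theory Num.Theory.
Local Open Scope ring_scope.
Local Open Scope classical_set_scope.

Definition is_copula_rv (R : realType) (dT : measure_display)
  (T : measurableType dT) (P : probability T R) (d : nat)
  (U : 'I_d -> T -> R) : Prop :=
  forall i, measurable_fun setT (U i) /\
    forall t : R, 0 <= t <= 1 -> P [set w | U i w <= t] = t%:E.

Definition copula_cdf (R : realType) (dT : measure_display)
  (T : measurableType dT) (P : probability T R) (d : nat)
  (U : 'I_d -> T -> R) (u : 'I_d -> R) : R :=
  fine (P [set w | forall i, U i w <= u i]).

Definition is_Dnorm_generator (R : realType) (dT : measure_display)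
  (T : measurableType dT) (Q : probability T R) (d : nat)
  (Z : 'I_d -> T -> R) : Prop :=
  forall i, measurable_fun setT (Z i) /\ (forall w, 0 <= Z i w) /\
    Q.-integrable setT (EFin \o Z i) /\
    (\int[Q]_(w in setT) (Z i w)%:E = 1)%E.

Definition Dnorm (R : realType) (dT : measure_display)
  (T : measurableType dT) (Q : probability T R) (d : nat)
  (Z : 'I_d -> T -> R) (x : 'I_d -> R) : R :=
  fine (\int[Q]_(w in setT) (\big[Num.max/0]_(i < d) (`|x i| * Z i w))%:E).

(* F-norm on R^{d+1}: ||x||_C = E(max(|x_0|, |x_1| U_1, ..., |x_d| U_d)),
   where component 0 of x : 'I_d.+1 -> R is x_0 and component lift ord0 i
   is x_{i+1}. *)
Definition Fnorm (R : realType) (dT : measure_display)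
  (T : measurableType dT) (P : probability T R) (d : nat)
  (U : 'I_d -> T -> R) (x : 'I_d.+1 -> R) : R :=
  fine (\int[P]_(w in setT)
    (Num.max `|x ord0| (\big[Num.max/0]_(i < d) (`|x (lift ord0 i)| * U i w)))%:E).

Definition x_ones (R : realType) (d : nat) (x : R) : 'I_d.+1 -> R :=
  fun i => if i == ord0 then x else 1.

From HB Require Import structures.
From mathcomp Require Import all_boot all_order all_algebra.
From mathcomp Require Import all_classical all_reals all_analysis.
From mathcomp Require Import measurable_realfun ring lra.
Import Order.TTheory GRing.Theory Num.Theory.
Local Open Scope ring_scope.
Local Open Scope classical_set_scope.

(* Write M := max_i U_i and c := ||1||_D.  For 0 <= x < 1 the F-norm of (x,1,...,1) is
   E max(x, M), and on the diagonal P(M > t) = 1 - C(t,...,t) = (1 - t) c + o(1 - t) by the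
   expansion of C and the homogeneity of ||.||_D; in particular M <= 1 almost surely.  Hence
   E max(x, M) = x + int_x^1 P(M > t) dt = x + c (1 - x)^2 / 2 + o((1 - x)^2).  The integral
   is never formed: E max(x, M) is squeezed between the expectations of two staircase
   functions of M, which are x plus the right and the left Riemann sums of t |-> P(M > t) on a
   uniform n-step grid of [x, 1]; for the linear profile (1 - t) c these sums differ from the
   integral by c (1 - x)^2 / (2 n). *)

Section staircase.
Variable R : realType.

Lemma max_le_stair_sum (D y : R) n : 0 <= D -> forall a : R,
  y <= a + n%:R * D ->
  Num.max a y <= a + \sum_(k < n) (if a + k%:R * D < y then D else 0).
Proof.
move=> D0; elim: n => [|n IHn] a.
  by rewrite big_ord0 mul0r !addr0 => ya; rewrite ge_max lexx ya.
move=> ya; rewrite big_ord_recl mul0r addr0.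
under eq_bigr => k _ do
  rewrite lift0 mulrSr mulrDl mul1r addrA [a + _ + D]addrAC.
have {}IHn := IHn (a + D) ltac:(move: ya; rewrite mulrSr; lra).
have [ay|ya'] := ltP a y.
  by rewrite addrA; apply: le_trans IHn; rewrite le_max lexx orbT.
rewrite add0r ler_wpDr //; apply: sumr_ge0 => k _.
by case: ifP.
Qed.

Lemma stair_sum_le_max (D y : R) n : forall a : R,
  a + \sum_(k < n) (if a + k.+1%:R * D < y then D else 0) <= Num.max a y.
Proof.
elim: n => [|n IHn] a; first by rewrite big_ord0 addr0 le_max lexx.
rewrite big_ord_recl mul1r.
under eq_bigr => k _ do
  rewrite lift0 [k.+2%:R]mulrSr mulrDl mul1r addrA [a + _ + D]addrAC.
have {}IHn := IHn (a + D).
have [ay|ya'] := ltP (a + D) y.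
  rewrite addrA; apply: le_trans IHn _.
  by rewrite (max_idPr (ltW ay)) le_max lexx orbT.
move: IHn; rewrite (max_idPl ya') => IHn.
rewrite le_max; apply/orP; left; lra.
Qed.

Lemma sum_natr_mul2 n : (\sum_(k < n) (k%:R : R)) * 2 = n%:R * (n%:R - 1).
Proof.
elim: n => [|n IHn]; first by rewrite big_ord0; ring.
by rewrite big_ord_recr /= mulrDl IHn mulrSr; ring.
Qed.

Lemma sum_linear_grid (a b h : R) (m : nat) n :
  \sum_(k < n) (b - (a + (k + m)%:R * h))
  = n%:R * (b - a - m%:R * h) - h * (n%:R * (n%:R - 1) / 2).
Proof.
have sE : \sum_(k < n) (k%:R : R) = n%:R * (n%:R - 1) / 2.
  by rewrite -sum_natr_mul2; field.
rewrite (eq_bigr (fun k : 'I_n => b - a - m%:R * h - h * k%:R)); last first.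
  by move=> k _; rewrite natrD; ring.
by rewrite sumrB sumr_const card_ord -mulr_sumr sE [in RHS]mulr_natl.
Qed.

Lemma left_riemann_sum_linear (a b : R) n : (0 < n)%N ->
  (b - a) / n%:R * \sum_(k < n) (b - (a + k%:R * ((b - a) / n%:R)))
  = (b - a) ^+ 2 / 2 * (1 + n%:R^-1).
Proof.
move=> n0; have n0' : n%:R != 0 :> R by rewrite pnatr_eq0 -lt0n.
under eq_bigr => k _ do rewrite -[k : nat]addn0.
by rewrite sum_linear_grid; field.
Qed.

Lemma right_riemann_sum_linear (a b : R) n : (0 < n)%N ->
  (b - a) / n%:R * \sum_(k < n) (b - (a + k.+1%:R * ((b - a) / n%:R)))
  = (b - a) ^+ 2 / 2 * (1 - n%:R^-1).
Proof.
move=> n0; have n0' : n%:R != 0 :> R by rewrite pnatr_eq0 -lt0n.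
under eq_bigr => k _ do rewrite -addn1.
by rewrite sum_linear_grid; field.
Qed.

Lemma expansion_of_sum_bounds (F x c e v : R) :
  0 <= c -> 0 <= e -> 0 <= v <= 1 ->
  x + (1 - e) * c * ((1 - x) ^+ 2 / 2 * (1 - v)) <= F ->
  F <= x + (1 + e) * c * ((1 - x) ^+ 2 / 2 * (1 + v)) ->
  `|(1 - F) - ((1 - x) - (1 - x) ^+ 2 / 2 * c)| <= (e + v) * c * (1 - x) ^+ 2.
Proof.
move=> c0 e0 /andP[v0 v1] lower upper.
set K := c * (1 - x) ^+ 2.
have K0 : 0 <= K by rewrite mulr_ge0 // sqr_ge0.
have eKv : e * K * v <= e * K by rewrite ler_piMr // mulr_ge0.
have eKv0 : 0 <= e * K * v by do 2?apply: mulr_ge0.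
have Kv0 : 0 <= K * v by rewrite mulr_ge0.
have UE : (1 + e) * c * ((1 - x) ^+ 2 / 2 * (1 + v))
          = K / 2 + e * K / 2 + K * v / 2 + e * K * v / 2 by rewrite /K; ring.
have LE : (1 - e) * c * ((1 - x) ^+ 2 / 2 * (1 - v))
          = K / 2 - e * K / 2 - K * v / 2 + e * K * v / 2 by rewrite /K; ring.
have -> : (1 - x) ^+ 2 / 2 * c = K / 2 by rewrite /K; ring.
have -> : (e + v) * c * (1 - x) ^+ 2 = e * K + K * v by rewrite /K; ring.
by rewrite ler_norml; apply/andP; split; lra.
Qed.

End staircase.

Lemma measurable_bigmax (R : realType) (dT : measure_display)
    (T : measurableType dT) (I : Type) (s : seq I) (f : I -> T -> R) :
  (forall i, measurable_fun setT (f i)) ->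
  measurable_fun setT (fun w => \big[Num.max/0]_(i <- s) f i w).
Proof.
move=> mf; elim: s => [|i s IHs].
  by under eq_fun do rewrite big_nil; exact: measurable_cst.
by under eq_fun do rewrite big_cons; exact: measurable_maxr.
Qed.

Lemma measurable_ltr_set (R : realType) (dT : measure_display)
    (T : measurableType dT) (M : T -> R) (t : R) :
  measurable_fun setT M -> measurable [set w | t < M w].
Proof.
move=> mM; have := mM measurableT _ (measurable_itv `]t, +oo[%R).
rewrite setTI; congr measurable.
by apply/seteqP; split => w /=; rewrite in_itv /= andbT.
Qed.

Section staircase_expectation.
Context {R : realType} {dT : measure_display} {T : measurableType dT}.
Variables (P : probability T R) (M : T -> R).

Definition tail_prob (t : R) : R := fine (P [set w | t < M w]).

Hypothesis mM : measurable_fun setT M.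

Let stair_indicE (a D : R) (b : nat -> R) n w :
  (a + \sum_(k < n) (if b k < M w then D else 0))%:E =
  (a%:E + \sum_(k < n) (D%:E * (\1_[set w | b k < M w] w)%:E))%E.
Proof.
rewrite EFinD sumEFin; congr (_ + _)%E; congr EFin; apply: eq_bigr => k _.
rewrite indicE; case: ifPn => bkM; first by rewrite mem_set ?mulr1.
by rewrite memNset ?mulr0 //=; apply/negP.
Qed.

Let measurable_indic_scale (D : R) (b : R) :
  measurable_fun setT (fun w => (D%:E * (\1_[set w | b < M w] w)%:E)%E).
Proof.
apply/measurable_EFinP; apply: measurable_funM; first exact: measurable_cst.
by apply: measurable_indic; exact: measurable_ltr_set.
Qed.

Lemma measurable_stair (a D : R) (b : nat -> R) n :
  measurable_fun setT
    (fun w => (a + \sum_(k < n) (if b k < M w then D else 0))%:E).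
Proof.
under eq_fun do rewrite stair_indicE.
apply: emeasurable_funD; first exact: measurable_cst.
by apply: emeasurable_sum => k; exact: measurable_indic_scale.
Qed.

Lemma integral_stair (a D : R) (b : nat -> R) n : 0 <= a -> 0 <= D ->
  (\int[P]_(w in setT) (a + \sum_(k < n) (if b k < M w then D else 0))%:E
   = (a + D * \sum_(k < n) tail_prob (b k))%:E)%E.
Proof.
move=> a0 D0; under eq_integral do rewrite stair_indicE.
have indic_ge0 k w : (0 <= D%:E * (\1_[set w | b k < M w] w)%:E)%E.
  by rewrite -EFinM lee_fin mulr_ge0.
rewrite ge0_integralD //; last 2 first.
- by move=> w _; apply: sume_ge0 => k _.
- by apply: emeasurable_sum => k; exact: measurable_indic_scale.
have PT : (P : {measure set T -> \bar R}) setT = 1%E by exact: probability_setT.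
rewrite integral_cst // PT mule1 ge0_integral_sum //.
rewrite mulr_sumr EFinD -sumEFin; congr (_ + _)%E; apply: eq_bigr => k _.
rewrite ge0_integralZl_EFin //; last first.
  by apply/measurable_EFinP; apply: measurable_indic; exact: measurable_ltr_set.
rewrite integral_indic ?setIT ?EFinM ?fineK ?fin_num_measure //.
all: exact: measurable_ltr_set.
Qed.

Lemma integral_max_le_left_sum (a D : R) n : 0 <= a -> 0 <= D ->
  P [set w | a + n%:R * D < M w] = 0%E ->
  (\int[P]_(w in setT) (Num.max a (M w))%:E
   <= (a + D * \sum_(k < n) tail_prob (a + k%:R * D))%:E)%E.
Proof.
move=> a0 D0 null; rewrite -(@integral_stair a D (fun k => a + k%:R * D)) //.
apply: ae_ge0_le_integral => //.
- by move=> w _; rewrite lee_fin le_max a0.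
- by apply/measurable_EFinP; apply: measurable_maxr => //; exact: measurable_cst.
- move=> w _; rewrite lee_fin addr_ge0 // sumr_ge0 // => k _.
  by case: ifP.
- exact: (measurable_stair _ _ (fun k => a + k%:R * D)).
exists [set w | a + n%:R * D < M w]; split => //; first exact: measurable_ltr_set.
move=> w /=; apply: contra_notP => /negP; rewrite -leNgt => Mw _.
by rewrite lee_fin max_le_stair_sum.
Qed.

Lemma right_sum_le_integral_max (a D : R) n : 0 <= a -> 0 <= D ->
  ((a + D * \sum_(k < n) tail_prob (a + k.+1%:R * D))%:E
   <= \int[P]_(w in setT) (Num.max a (M w))%:E)%E.
Proof.
move=> a0 D0; rewrite -(@integral_stair a D (fun k => a + k.+1%:R * D)) //.
apply: ge0_le_integral => //.
- move=> w _; rewrite lee_fin addr_ge0 // sumr_ge0 // => k _.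
  by case: ifP.
- exact: (measurable_stair _ _ (fun k => a + k.+1%:R * D)).
- by apply/measurable_EFinP; apply: measurable_maxr => //; exact: measurable_cst.
- by move=> w _; rewrite lee_fin stair_sum_le_max.
Qed.

Lemma expectation_max_expansion (x c e : R) n :
  0 <= x <= 1 -> 0 <= c -> 0 <= e -> (0 < n)%N ->
  (forall t, x <= t <= 1 -> `|tail_prob t - (1 - t) * c| <= e * ((1 - t) * c)) ->
  `|(1 - fine (\int[P]_(w in setT) (Num.max x (M w))%:E))
      - ((1 - x) - (1 - x) ^+ 2 / 2 * c)|
    <= (e + n%:R^-1) * c * (1 - x) ^+ 2.
Proof.
move=> /andP[x0 x1] c0 e0 n0 tail_near.
have n0' : 0 < n%:R :> R by rewrite ltr0n.
set h := (1 - x) / n%:R.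
have h0 : 0 <= h by rewrite divr_ge0 // subr_ge0.
have grid k : (k <= n)%N -> x <= x + k%:R * h <= 1.
  move=> kn; have : k%:R * h <= n%:R * h by rewrite ler_wpM2r // ler_nat.
  rewrite (_ : n%:R * h = 1 - x); last by rewrite /h; field; rewrite gt_eqF.
  by move=> kh; apply/andP; split; [rewrite lerDl mulr_ge0 | lra].
have tail_ub t : x <= t <= 1 -> tail_prob t <= (1 + e) * c * (1 - t).
  by move=> /tail_near; rewrite ler_norml => /andP[_]; lra.
have tail_lb t : x <= t <= 1 -> (1 - e) * c * (1 - t) <= tail_prob t.
  by move=> /tail_near; rewrite ler_norml => /andP[+ _]; lra.
have null : P [set w | x + n%:R * h < M w] = 0%E.
  have -> : x + n%:R * h = 1 by rewrite /h; field; rewrite gt_eqF.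
  have m1 : measurable [set w | 1 < M w] by exact: measurable_ltr_set.
  rewrite -[P _]fineK ?fin_num_measure //; congr EFin.
  apply/eqP; rewrite -normr_le0.
  by have := tail_near 1; rewrite subrr !mul0r mulr0 subr0; apply; rewrite lexx x1.
have upper := integral_max_le_left_sum x h n x0 h0 null.
have lower := right_sum_le_integral_max x h n x0 h0.
have fin : (\int[P]_(w in setT) (Num.max x (M w))%:E)%E \is a fin_num.
  rewrite ge0_fin_numE ?(le_lt_trans upper) ?ltry //.
  by apply: integral_ge0 => w _; rewrite lee_fin le_max x0.
move: upper lower; rewrite -(fineK fin) !lee_fin /= => upper lower.
have left_sum : h * \sum_(k < n) tail_prob (x + k%:R * h)
    <= (1 + e) * c * ((1 - x) ^+ 2 / 2 * (1 + n%:R^-1)).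
  apply: (@le_trans _ _ (h * \sum_(k < n) ((1 + e) * c * (1 - (x + k%:R * h))))).
    by rewrite ler_wpM2l // ler_sum // => k _; rewrite tail_ub // grid // ltnW.
  by rewrite -mulr_sumr mulrCA left_riemann_sum_linear.
have right_sum : (1 - e) * c * ((1 - x) ^+ 2 / 2 * (1 - n%:R^-1))
    <= h * \sum_(k < n) tail_prob (x + k.+1%:R * h).
  apply: (@le_trans _ _ (h * \sum_(k < n) ((1 - e) * c * (1 - (x + k.+1%:R * h))))).
    by rewrite -mulr_sumr [leRHS]mulrCA right_riemann_sum_linear.
  by rewrite ler_wpM2l // ler_sum // => k _; rewrite tail_lb // grid.
apply: expansion_of_sum_bounds => //; first by rewrite invr_ge0 ler0n invf_le1 // ler1n.
  by apply: le_trans lower; rewrite lerD2l.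
by apply: le_trans upper _; rewrite lerD2l.
Qed.

End staircase_expectation.

Lemma tail_prob_bigmax_copula (R : realType) (dT : measure_display)
    (T : measurableType dT) (P : probability T R) d (U : 'I_d -> T -> R) (t : R) :
  (forall i, measurable_fun setT (U i)) -> 0 <= t ->
  tail_prob P (fun w => \big[Num.max/0]_(i < d) U i w) t
  = 1 - copula_cdf P U (fun _ => t).
Proof.
move=> mU t0; rewrite /tail_prob; set A := [set w | t < _].
have mA : measurable A by apply: measurable_ltr_set; exact: measurable_bigmax.
rewrite /copula_cdf (_ : [set w | forall i, U i w <= t] = ~` A).
  by rewrite probability_setC // -[P A]fineK ?fin_num_measure //=; ring.
apply/seteqP; split => w /=.
  by move=> Ut; apply/negP; rewrite -leNgt; apply/bigmax_leP; split => // i _.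
by move/negP; rewrite -leNgt => /bigmax_leP [_ Ut] i; exact: Ut.
Qed.

Lemma fine_mulr_ge0 (R : realType) (a : R) (y : \bar R) : 0 <= a -> (0 <= y)%E ->
  fine (a%:E * y)%E = a * fine y.
Proof.
move=> a0; case: y => [r| |] //= _.
have [->|a_neq0] := eqVneq a 0; first by rewrite mul0e mul0r.
by rewrite gt0_muley ?lte_fin ?lt_def ?a_neq0 //= mulr0.
Qed.

Lemma bigmaxr_pMl (R : realType) (I : Type) (s : seq I) (a : R) (f : I -> R) :
  0 <= a -> \big[Num.max/0]_(i <- s) (a * f i) = a * \big[Num.max/0]_(i <- s) f i.
Proof.
move=> a0; elim/big_ind2 : _ => [|y1 z1 y2 z2 -> ->|//]; first by rewrite mulr0.
by rewrite maxr_pMr.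
Qed.

Lemma Dnorm_ge0 (R : realType) (dS : measure_display) (S : measurableType dS)
    (Q : probability S R) d (Z : 'I_d -> S -> R) (x : 'I_d -> R) :
  0 <= Dnorm Q Z x.
Proof.
by rewrite fine_ge0 // integral_ge0 // => w _; rewrite lee_fin; apply/bigmax_geP; left.
Qed.

Lemma DnormZ (R : realType) (dS : measure_display) (S : measurableType dS)
    (Q : probability S R) d (Z : 'I_d -> S -> R) (a : R) (x : 'I_d -> R) :
  (forall i, measurable_fun setT (Z i)) -> (forall i w, 0 <= Z i w) ->
  Dnorm Q Z (fun i => a * x i) = `|a| * Dnorm Q Z x.
Proof.
move=> mZ Z0; rewrite [in RHS]/Dnorm -fine_mulr_ge0 //; last first.
  by apply: integral_ge0 => w _; rewrite lee_fin; apply/bigmax_geP; left.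
rewrite /Dnorm; congr fine.
have bigmax_ge0 w : 0 <= \big[Num.max/0]_(i < d) (`|x i| * Z i w).
  by apply/bigmax_geP; left.
have scaleE w : (\big[Num.max/0]_(i < d) (`|a * x i| * Z i w))%:E
    = (`|a|%:E * (\big[Num.max/0]_(i < d) (`|x i| * Z i w))%:E)%E.
  rewrite -EFinM -bigmaxr_pMl //; congr EFin.
  by apply: eq_bigr => i _; rewrite normrM mulrA.
under eq_integral do rewrite scaleE.
rewrite ge0_integralZl_EFin //.
- by move=> w _; rewrite lee_fin.
- apply/measurable_EFinP; apply: measurable_bigmax => i.
  by apply: measurable_funM => //; exact: measurable_cst.
Qed.

Lemma Dnorm_cst (R : realType) (dS : measure_display) (S : measurableType dS)
    (Q : probability S R) d (Z : 'I_d -> S -> R) (a : R) :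
  (forall i, measurable_fun setT (Z i)) -> (forall i w, 0 <= Z i w) -> 0 <= a ->
  Dnorm Q Z (fun _ => a) = a * Dnorm Q Z (fun _ => 1).
Proof.
move=> mZ Z0 a0; rewrite -[a in RHS]ger0_norm // -DnormZ //.
by congr Dnorm; apply/funext => i; rewrite mulr1.
Qed.

Lemma Fnorm_x_ones (R : realType) (dT : measure_display) (T : measurableType dT)
    (P : probability T R) d (U : 'I_d -> T -> R) (x : R) : 0 <= x ->
  Fnorm P U (x_ones x)
  = fine (\int[P]_(w in setT) (Num.max x (\big[Num.max/0]_(i < d) U i w))%:E)%E.
Proof.
move=> x0; rewrite /Fnorm /x_ones eqxx ger0_norm //; congr fine.
apply: eq_integral => w _; congr (EFin (Num.max _ _)); apply: eq_bigr => i _.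
by rewrite eq_sym (negbTE (neq_lift ord0 i)) normr1 mul1r.
Qed.

Lemma tail_prob_bigmax_error {R : realType} {dT : measure_display}
    {T : measurableType dT} (P : probability T R) {dS : measure_display}
    {S : measurableType dS} (Q : probability S R) {d} {U : 'I_d -> T -> R}
    {Z : 'I_d -> S -> R} (t : R) :
  (forall i, measurable_fun setT (U i)) ->
  (forall i, measurable_fun setT (Z i)) -> (forall i w, 0 <= Z i w) ->
  0 <= t <= 1 ->
  `|tail_prob P (fun w => \big[Num.max/0]_(i < d) U i w) t
     - (1 - t) * Dnorm Q Z (fun _ => 1)|
  = `|copula_cdf P U (fun _ => t) - (1 - Dnorm Q Z (fun _ => 1 - t))|.
Proof.
move=> mU mZ Z0 /andP[t0 t1].
rewrite [in RHS]Dnorm_cst ?subr_ge0 // tail_prob_bigmax_copula //.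
by rewrite [RHS]distrC addrAC.
Qed.

Theorem proposition2p21 (R : realType) (d : nat)
  (dT : measure_display) (T : measurableType dT) (P : probability T R)
  (U : 'I_d -> T -> R)
  (dS : measure_display) (S : measurableType dS) (Q : probability S R)
  (Z : 'I_d -> S -> R) :
  is_copula_rv P U ->
  is_Dnorm_generator Q Z ->
  (* C(u) = 1 - ||1-u||_D + o(||1-u||_D) as u increases to 1 componentwise *)
  (forall eps : R, 0 < eps -> exists delta : R, 0 < delta /\
     forall u : 'I_d -> R, (forall i, 1 - delta < u i <= 1) ->
       `|copula_cdf P U u - (1 - Dnorm Q Z (fun i => 1 - u i))|
         <= eps * Dnorm Q Z (fun i => 1 - u i)) ->
  (* 1 - ||(x,1,..,1)||_C = (1-x) - (1-x)^2/2 ||1||_D + o((1-x)^2) as x ↑ 1 *)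
  forall eps : R, 0 < eps -> exists delta : R, 0 < delta /\
    forall x : R, 1 - delta < x < 1 ->
      `|(1 - Fnorm P U (@x_ones R d x))
          - ((1 - x) - (1 - x) ^+ 2 / 2 * Dnorm Q Z (fun _ => 1))|
        <= eps * (1 - x) ^+ 2.
Proof.
move=> hU hZ near_one eps eps0.
have mU i : measurable_fun setT (U i) := (hU i).1.
have mZ i : measurable_fun setT (Z i) := (hZ i).1.
have Z0 i w : 0 <= Z i w := (hZ i).2.1 w.
set c := Dnorm Q Z (fun _ => 1).
have c0 : 0 <= c by exact: Dnorm_ge0.
have [e e0 ec] : exists2 e : R, 0 < e & e * (c + 1) = eps / 2.
  by exists (eps / (2 * (c + 1))); [rewrite divr_gt0 // mulr_gt0 | field]; lra.
have [delta [delta0 C_near]] := near_one e e0.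
have [n n_inv_lt] : exists n, n.+1%:R^-1 < e.
  by exists (Num.truncn e^-1); rewrite -ltf_pV2 ?posrE ?invr_gt0 // invrK truncnS_gt.
have err : (e + n.+1%:R^-1) * c <= eps.
  have nc : n.+1%:R^-1 * c <= e * c by rewrite ler_wpM2r // ltW.
  by rewrite mulrDl; move: (n.+1%:R^-1 * c) nc => b nc; lra.
exists (Num.min delta 1); split => [|x /andP[x_gt x1]].
  by rewrite lt_min delta0 ltr01.
have [x_delta x0] : 1 - delta < x /\ 0 <= x.
  by move: x_gt; rewrite ltrBlDl -ltrBlDr lt_min => /andP[]; split; lra.
rewrite Fnorm_x_ones //.
apply: le_trans (expectation_max_expansion P _ _ x c e n.+1 _ c0 (ltW e0) _ _) _.
- exact: measurable_bigmax.
- by rewrite x0 ltW.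
- by [].
- move=> t /andP[xt t1]; have t01 : 0 <= t <= 1 by rewrite t1 andbT; lra.
  rewrite (tail_prob_bigmax_error P Q t mU mZ Z0 t01) -Dnorm_cst ?subr_ge0 //.
  by apply: C_near => i; rewrite t1 andbT; lra.
- by rewrite ler_wpM2r ?sqr_ge0.
Qed.
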